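(* Fix an integer $J\ge 2$, a finite set $\mathcal{G}$ of group labels, and strictly decreasing positive weights $w_1>w_2>\cdots>w_J>0$. Consider a single query (indices $q$ suppressed) in which there are $J$ candidates $j=1,\dots,J$, each with a feature vector $X_j$, a group status $G_j\in\mathcal{G}$ and a real-valued integrable outcome $Y_j$, all defined on a common probability space. Let $\mathcal{I}=\{(X_j,G_j)\}_{j=1}^J$ be the Ranker's information, and let the ranking $j(\cdot):\{1,\dots,J\}\to\{1,\dots,J\}$ be a bijection that is a (measurable) function of $\mathcal{I}$, where $j(r)$ is the index of the candidate placed in rank $r$. Write $\mathbf{G}=(G_{j(1)},\dots,G_{j(J)})$ for the rank-ordered vector of group statuses. Suppose the Ranker is unbiased, i.e. for almost every realization of $\mathcal{I}$ the ranking $j(\cdot)$ maximizes $E\left[\sum_{r=1}^J w_r Y_{j(r)}\,\middle|\,\mathcal{I}\right]$ over all bijections of $\{1,\dots,J\}$. Then for all ranks $1\le a<b\le J$ and all $g\in\mathcal{G}^J$ with $P(\mathbf{G}=g)>0$, $$E\left[Y_{j(a)}-Y_{j(b)}\,\middle|\,\mathbf{G}=g\right]\ \ge\ 0.$$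
   Context: The outcomes $Y_j$ are realized after the ranking and do not depend on the ranking. An Auditor observes only the rank-ordered outcomes $(Y_{j(1)},\dots,Y_{j(J)})$ and the rank-ordered group statuses $\mathbf{G}$, not the features $X_j$. Rank 1 is the best rank and there are no ties. *)

From HB Require Import structures.
From mathcomp Require Import all_boot all_order all_algebra all_fingroup.
From mathcomp Require Import all_classical all_reals all_analysis.
Set Implicit Arguments. Unset Strict Implicit. Unset Printing Implicit Defensive.
Import Order.TTheory GRing.Theory Num.Theory.
Local Open Scope classical_set_scope.
Local Open Scope ring_scope.

Section Defs.
Context (d : measure_display) (T : measurableType d) (R : realType).

Definition info_sigma (J : nat) (dX : measure_display) (Xt : measurableType dX)
    (Gt : finType) (X : 'I_J -> T -> Xt) (G : 'I_J -> T -> Gt) : set (set T) :=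
  <<s [set A | exists j : 'I_J,
          (exists B : set Xt, measurable B /\ A = X j @^-1` B)
       \/ (exists g : Gt, A = G j @^-1` [set g])] >>.

Definition is_cond_exp (P : probability T R) (S : set (set T)) (Z h : T -> R) : Prop :=
  [/\ P.-integrable setT (EFin \o h),
      (forall B : set R, measurable B -> S (h @^-1` B))
    & (forall A, S A -> (\int[P]_(x in A) (h x)%:E = \int[P]_(x in A) (Z x)%:E)%E)].

Definition cond_exp_event (P : probability T R) (E : set T) (Z : T -> R) : R :=
  fine (\int[P]_(x in E) (Z x)%:E)%E / fine (P E).

End Defs.

(* Split the event {G = g} according to the realized ranking s. Each piece
   A_s = {rank = s, G_(s r) = g_r for all r} is determined by the Ranker's
   information, so unbiasedness compares, in expectation over A_s, the ranking s
   with the ranking that exchanges the candidates in ranks a and b. The two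
   weighted sums differ by (w_a - w_b)(Y_(s a) - Y_(s b)) and w_a > w_b, hence
   E[(Y_(s a) - Y_(s b)) 1_(A_s)] >= 0; summing over s gives the claim. *)

From HB Require Import structures.
From mathcomp Require Import all_boot all_order all_algebra all_fingroup.
From mathcomp Require Import all_classical all_reals all_analysis.
From mathcomp Require Import measurable_realfun ring.
Import Order.TTheory GRing.Theory Num.Theory.
Local Open Scope classical_set_scope.
Local Open Scope ring_scope.

Definition rank_group_event {T : Type} {J : nat} {Gt : Type}
    (G : 'I_J -> T -> Gt) (rk : T -> {perm 'I_J}) (s : {perm 'I_J})
    (g : 'I_J -> Gt) : set T :=
  [set x | rk x = s /\ forall r, G (s r) x = g r].

Section InformationSigmaAlgebra.
Context {d : measure_display} {T : measurableType d} {J : nat}.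
Context {dX : measure_display} {Xt : measurableType dX} {Gt : finType}.
Context {X : 'I_J -> T -> Xt} {G : 'I_J -> T -> Gt}.

Lemma info_sigma_measurable :
  (forall j, measurable_fun setT (X j)) ->
  (forall j (g : Gt), measurable (G j @^-1` [set g])) ->
  forall A, info_sigma X G A -> measurable A.
Proof.
move=> hX hG A; apply: smallest_sub; first exact: sigma_algebra_measurable.
move=> _ [j [[B [mB ->]]|[g ->]]]; last exact: hG.
by rewrite -[X j @^-1` B]setTI; exact: hX.
Qed.

Lemma info_sigma_preimage_group j (g : Gt) : info_sigma X G (G j @^-1` [set g]).
Proof. by apply: sub_gen_smallest; exists j; right; exists g. Qed.

Lemma info_sigma_rank_group_event rk s g :
  info_sigma X G [set x | rk x = s] -> info_sigma X G (rank_group_event G rk s g).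
Proof.
move=> hrk; have -> : rank_group_event G rk s g =
    [set x | rk x = s] `&` \bigcap_(r in setT) (G (s r) @^-1` [set g r]).
  by apply/seteqP; split=> x [e H]; split=> // r *; apply: H.
apply: (@measurableI _ (g_sigma_algebraType _)) => //.
apply: (@fin_bigcap_measurable _ (g_sigma_algebraType _)) => [|r _].
  exact: finite_finset.
exact: info_sigma_preimage_group.
Qed.

End InformationSigmaAlgebra.

(* [(tperm a b * s) r = s (tperm a b r)]: the ranking s with ranks a and b
   exchanged. *)
Lemma weighted_sum_tperm {R : comRingType} {n : nat} (w y : 'I_n -> R)
    (s : {perm 'I_n}) (a b : 'I_n) : a != b ->
  \sum_(r < n) w r * y (s r) - \sum_(r < n) w r * y ((tperm a b * s)%g r)
  = (w a - w b) * (y (s a) - y (s b)).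
Proof.
move=> ab; rewrite -sumrB (bigD1 a) //= (bigD1 b) /=; last by rewrite eq_sym ab.
rewrite big1 ?addr0; last first.
  by move=> r /andP[ra rb]; rewrite permM tpermD 1?eq_sym // subrr.
by rewrite !permM tpermL tpermR; ring.
Qed.

Section ConditionalExpectation.
Context {d : measure_display} {T : measurableType d} {R : realType}.
Variables (P : probability T R) (S : set (set T)).

Lemma is_cond_exp_le_integral (Z Z' h h' : T -> R) (A : set T) :
  is_cond_exp P S Z h -> is_cond_exp P S Z' h' ->
  {ae P, forall x, h' x <= h x} -> measurable A -> S A ->
  (\int[P]_(x in A) (Z' x)%:E <= \int[P]_(x in A) (Z x)%:E)%E.
Proof.
move=> [hI _ hE] [h'I _ h'E] hh' mA SA; rewrite -hE // -h'E //.
have iA f : P.-integrable setT f -> P.-integrable A f.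
  by move=> fI; exact: integrableS measurableT mA (subsetT _) fI.
have mdiff : measurable_fun A (EFin \o (fun x => h x - h' x)).
  apply/measurable_EFinP/measurable_funB; apply/measurable_EFinP.
    exact: measurable_int (iA _ hI).
  exact: measurable_int (iA _ h'I).
rewrite -sube_ge0; last by rewrite integrable_fin_num //; exact: iA.
rewrite -integralB_EFin //; [|exact: iA|exact: iA].
rewrite (ae_eq_integral (EFin \o (fun x => h x - h' x)%R)^\+)%E //.
- by apply: integral_ge0 => x _; exact: funepos_ge0.
- exact: measurable_funepos.
- apply: filterS hh' => x hx _; rewrite funeposE /= EFinB.
  by apply/esym/max_idPl; rewrite lee_fin subr_ge0.
Qed.

Lemma cond_exp_event_ge0 (E : set T) (Z : T -> R) :
  (0 <= \int[P]_(x in E) (Z x)%:E)%E -> 0 <= cond_exp_event P E Z.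
Proof. by move=> ZE; apply: divr_ge0; exact: fine_ge0. Qed.

End ConditionalExpectation.

Lemma measurable_fun_ranked {d : measure_display} {T : measurableType d}
    {R : realType} {J : nat} (Y : 'I_J -> T -> R) (rk : T -> {perm 'I_J})
    (k : 'I_J) :
  (forall j, measurable_fun setT (Y j)) ->
  (forall s, measurable [set x | rk x = s]) ->
  measurable_fun setT (fun x => Y (rk x k) x).
Proof.
move=> mY mrk; have -> : (fun x => Y (rk x k) x) =
    (fun x => \sum_(s : {perm 'I_J}) (\1_[set y | rk y = s] x : R) * Y (s k) x).
  apply/funext => x; rewrite (bigD1 (rk x)) //= big1 ?addr0.
    by rewrite indicE mem_set // mul1r.
  by move=> s sx; rewrite indicE memNset ?mul0r //= => e; rewrite e eqxx in sx.
by apply: measurable_sum => s; apply: measurable_funM; [exact: measurable_indic|].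
Qed.

Section Rankings.
Context {d : measure_display} {T : measurableType d} {R : realType} {J : nat}.
Context {P : probability T R} {w : 'I_J -> R} {Y : 'I_J -> T -> R}.
Hypothesis hY : forall j, P.-integrable setT (EFin \o Y j).

Let ranked_gain (s : {perm 'I_J}) (x : T) := \sum_(r < J) w r * Y (s r) x.

Lemma integrable_ranked_gain s : P.-integrable setT (EFin \o ranked_gain s).
Proof.
have -> : EFin \o ranked_gain s =
    (fun x => \sum_(r < J) (w r)%:E * (Y (s r) x)%:E)%E.
  by apply/funext => x; rewrite /= -sumEFin; apply: eq_bigr => r _; rewrite EFinM.
apply: (integrable_sum measurableT) => r _.
exact: (integrableZl measurableT _ (hY _)).
Qed.

Lemma swap_ranks_integral_ge0 {S : set (set T)} {rk : T -> {perm 'I_J}}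
    {hrank hswap : T -> R} {s : {perm 'I_J}} {a b : 'I_J} {A : set T} :
  is_cond_exp P S (fun x => ranked_gain (rk x) x) hrank ->
  is_cond_exp P S (ranked_gain (tperm a b * s)%g) hswap ->
  {ae P, forall x, hswap x <= hrank x} ->
  measurable A -> S A -> A `<=` [set x | rk x = s] ->
  a != b -> w b < w a ->
  (0 <= \int[P]_(x in A) (Y (s a) x - Y (s b) x)%:E)%E.
Proof.
move=> hr hsw hle mA SA Ars ab wab.
set u := (tperm a b * s)%g.
have iA v : P.-integrable A (EFin \o ranked_gain v).
  exact: integrableS measurableT mA (subsetT _) (integrable_ranked_gain v).
have optimal : (\int[P]_(x in A) (ranked_gain u x)%:E
                <= \int[P]_(x in A) (ranked_gain s x)%:E)%E.
  have -> : (\int[P]_(x in A) (ranked_gain s x)%:E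
             = \int[P]_(x in A) (ranked_gain (rk x) x)%:E)%E.
    by apply: eq_integral => x /set_mem /Ars ->.
  exact: is_cond_exp_le_integral hsw hle mA SA.
have gain_diff x :
    ((w a - w b)%:E * (Y (s a) x - Y (s b) x)%:E =
     (ranked_gain s x)%:E - (ranked_gain u x)%:E)%E.
  by rewrite -EFinM -EFinB /ranked_gain (weighted_sum_tperm w (Y^~ x) s a b ab).
have iY : P.-integrable A (fun x => (Y (s a) x - Y (s b) x)%:E).
  have -> : (fun x => (Y (s a) x - Y (s b) x)%:E) =
      ((EFin \o Y (s a)) \- (EFin \o Y (s b)))%E.
    by apply/funext => x; rewrite EFinB.
  by apply: integrableB => //; exact: integrableS (hY _).
have : (0 <= (w a - w b)%:E * \int[P]_(x in A) (Y (s a) x - Y (s b) x)%:E)%E.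
  rewrite -(integralZl mA iY); under eq_integral => x _ do rewrite gain_diff.
  by rewrite integralB_EFin // sube_ge0 // (integrable_fin_num mA (iA u)).
by rewrite pmule_rge0 // lte_fin subr_gt0.
Qed.

End Rankings.

Theorem proposition1
  (d : measure_display) (T : measurableType d) (R : realType)
  (P : probability T R)
  (J : nat) (hJ : (2 <= J)%N)
  (w : 'I_J -> R)
  (hw_pos : forall r : 'I_J, 0 < w r)
  (hw_dec : forall r s : 'I_J, (r < s)%N -> w s < w r)
  (Gt : finType)
  (dX : measure_display) (Xt : measurableType dX)
  (X : 'I_J -> T -> Xt) (G : 'I_J -> T -> Gt) (Y : 'I_J -> T -> R)
  (hX : forall j, measurable_fun setT (X j))
  (hG : forall j (g : Gt), measurable (G j @^-1` [set g]))
  (hY : forall j, P.-integrable setT (EFin \o Y j))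
  (rk : T -> {perm 'I_J})
  (hrk : forall s : {perm 'I_J}, info_sigma X G [set x | rk x = s])
  (unbiased : exists (hrank : T -> R) (hs : {perm 'I_J} -> T -> R),
      [/\ is_cond_exp P (info_sigma X G)
            (fun x => \sum_(r < J) w r * Y (rk x r) x) hrank,
          (forall s : {perm 'I_J}, is_cond_exp P (info_sigma X G)
            (fun x => \sum_(r < J) w r * Y (s r) x) (hs s))
        & {ae P, forall x, forall s : {perm 'I_J}, hs s x <= hrank x}]) :
  forall (a b : 'I_J), (a < b)%N ->
  forall g : 'I_J -> Gt,
    let Eg := [set x | forall r : 'I_J, G (rk x r) x = g r] in
    (0 < P Eg)%E ->
    0 <= cond_exp_event P Eg (fun x => Y (rk x a) x - Y (rk x b) x).
Proof.
move=> a b ab g Eg _; have [hrank [hs [hr hsP hae]]] := unbiased.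
have ab' : a != b by rewrite neq_ltn ab.
have Smeas := info_sigma_measurable hX hG.
pose E s := rank_group_event G rk s g.
have SE s : info_sigma X G (E s).
  exact: info_sigma_rank_group_event _ _ _ (hrk s).
have mE s : measurable (E s) by exact: Smeas.
have EgU : Eg = \big[setU/set0]_(s <- enum {perm 'I_J}) E s.
  rewrite -bigcup_seq; apply/seteqP; split => x.
    by move=> Ex; exists (rk x) => //; rewrite /= mem_enum.
  by move=> [s _ [<- ?]].
have mYrk k : measurable_fun setT (fun x => Y (rk x k) x).
  apply: measurable_fun_ranked => [j|s]; last exact: Smeas (hrk s).
  by apply/measurable_EFinP; exact: measurable_int (hY j).
have mf : measurable_fun setT (fun x => (Y (rk x a) x - Y (rk x b) x)%:E).
  exact/measurable_EFinP/measurable_funB.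
apply: cond_exp_event_ge0; rewrite EgU integral_bigsetU_EFin //; first last.
- exact: measurable_funS mf.
- apply/trivIsetP => s t _ _ st; apply/seteqP; split => x // [[e1 _] [e2 _]].
  by rewrite -e1 -e2 eqxx in st.
- exact: enum_uniq.
apply: sume_ge0 => s _.
have -> : (\int[P]_(x in E s) (Y (rk x a) x - Y (rk x b) x)%:E
           = \int[P]_(x in E s) (Y (s a) x - Y (s b) x)%:E)%E.
  by apply: eq_integral => x /set_mem [-> _].
apply: (swap_ranks_integral_ge0 hY hr (hsP _) _ (mE s) (SE s)) => //.
- by apply: filterS hae => x; apply.
- by move=> x [].
- exact: hw_dec.
Qed.
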